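(* Let $k\ge 1$. For $j=1,\dots,k$ let $c_{a,j},c_{c,j}>0$, let $r_{a,j}:(0,\infty)\to(0,\infty)$ be positive, decreasing and at least twice continuously differentiable, and let $r_{c,j}:(0,\infty)\to(0,\infty)$ be positive, increasing and at least twice continuously differentiable. Let $w_j:(0,\infty)\to(0,\infty)$ and $\rho_j:(0,\infty)\to[-1,1]$ be given functions with $1-\rho_j^2(n)\le c_{a,j}r_{a,j}(n)$ and $w_j(n)\le c_{c,j}r_{c,j}(n)$; set $n_0^*=0$, $w_0(n_0^* )=1$. For a budget $p$, define sequentially: $u_1(n_1)=\frac{1}{p-n_1}\big(c_{a,1}r_{a,1}(n_1)+c_{c,1}r_{c,1}(n_1)\big)$ on $[1,p-1]$ with unique minimizer $n_1^*$, and for $j=2,\dots,k$, $$u_j(n_j)=\frac{1}{p_{j-1}-n_j}\Big(\kappa_{j-1}+\hat c_{a,j}r_{a,j}(n_j)+c_{c,j}r_{c,j}(n_j)\Big)\ \text{on } [1,p_{j-1}-1],$$ with unique minimizer $n_j^*$, where $p_{j-1}=p-\sum_{i=1}^{j-1}n_i^*$, $\kappa_{j-1}=\sum_{i=0}^{j-2}w_i(n_i^* )(1-\rho_{i+1}^2(n_{i+1}^* ))$, $\hat c_{a,j}=w_{j-1}(n_{j-1}^* )c_{a,j}$ (so $\hat c_{a,1}=c_{a,1}$). Assume that for each $j=1,\dots,k$, $$\hat c_{a,j}\,r_{a,j}''(n)+c_{c,j}\,r_{c,j}''(n)>0\quad\text{for all } n\in(0,\infty),$$ and that there exists $\bar n_j\in(0,\infty)$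 with $$\hat c_{a,j}\,r_{a,j}'(\bar n_j)+c_{c,j}\,r_{c,j}'(\bar n_j)=0.$$ Then there exist bounds $\bar n_1^*,\dots,\bar n_k^*$, independent of the budget $p$, such that $n_j^*\le \bar n_j^*$ for $j=1,\dots,k$.
   Context: Here $n_j$ is the number of high-fidelity evaluations used to train the $j$-th low-fidelity model in a context-aware multi-fidelity Monte Carlo estimator, $p$ is the total budget in units of high-fidelity evaluations, and $u_j$ is (up to constant factors) an upper bound of the estimator's mean-squared error in $n_j$ with the previously chosen $n_1^*,\dots,n_{j-1}^*$ fixed; the budgets are assumed large enough that all intervals $[1,p_{j-1}-1]$ are nonempty, and under the convexity hypotheses each $u_j$ has a unique minimizer $n_j^*$ there. *)

From Stdlib Require Import Reals.
From Coquelicot Require Import Coquelicot.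
Open Scope R_scope.

Fixpoint sumR (f : nat -> R) (n : nat) : R :=
  match n with O => 0 | S m => sumR f m + f m end.

Definition C2_pos (f : R -> R) : Prop :=
  forall x, 0 < x ->
    ex_derive f x /\ ex_derive (Derive f) x /\ continuous (Derive_n f 2) x.

Definition is_unique_argmin (f : R -> R) (a b x : R) : Prop :=
  a <= x <= b /\
  forall y, a <= y <= b -> f x <= f y /\ (f y = f x -> y = x).

(* w, rho : indexed families; ns : j |-> n_j^ * (for a fixed budget) *)

(* W i = w_i(n_i^ * ), with the convention w_0(n_0^ * ) = 1 *)
Definition Wv (w : nat -> R -> R) (ns : nat -> R) (i : nat) : R :=
  match i with O => 1 | _ => w i (ns i) end.

(* kappa_{j-1} = sum_{i=0}^{j-2} w_i(n_i^ * ) (1 - rho_{i+1}(n_{i+1}^ * )^2) *)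
Definition kappa (w rho : nat -> R -> R) (ns : nat -> R) (j : nat) : R :=
  sumR (fun i => Wv w ns i * (1 - (rho (S i) (ns (S i)))^2)) (j - 1).

(* hat c_{a,j} = w_{j-1}(n_{j-1}^ * ) c_{a,j}  (= c_{a,1} for j = 1) *)
Definition chat (w : nat -> R -> R) (ns : nat -> R) (c_a : nat -> R) (j : nat) : R :=
  Wv w ns (j - 1) * c_a j.

(* p_{j-1} = p - sum_{i=1}^{j-1} n_i^ *  (= p for j = 1) *)
Definition pbud (ns : nat -> R) (p : R) (j : nat) : R :=
  p - sumR (fun i => ns (S i)) (j - 1).

Definition u (w rho : nat -> R -> R) (ns : nat -> R) (c_a c_c : nat -> R)
  (r_a r_c : nat -> R -> R) (p : R) (j : nat) (n : R) : R :=
  (kappa w rho ns j + chat w ns c_a j * r_a j n + c_c j * r_c j n) / (pbud ns p j - n).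

Definition admissible (k : nat) (ns : nat -> R) (p : R) : Prop :=
  forall j, (1 <= j <= k)%nat -> 1 <= pbud ns p j - 1.

From Stdlib Require Import Reals Lra Lia Classical_Prop.
From Coquelicot Require Import Coquelicot.
Open Scope R_scope.

(* Comparing u_j at its minimiser with u_j(1), whose denominator is larger,
   gives c_{c,j} r_{c,j}(n_j^* ) <= hat c_{a,j} r_{a,j}(1) + c_{c,j} r_{c,j}(1).
   A strictly convex function with a stationary point grows at least linearly,
   so hat c_{a,j} r_{a,j} + c_{c,j} r_{c,j} is unbounded; as r_{a,j} decreases,
   r_{c,j} itself is unbounded, and since it increases the inequality confines
   n_j^* below a fixed level as soon as hat c_{a,j} is bounded independently of p.
   Finally hat c_{a,j+1} = w_j(n_j^* ) c_{a,j+1} <= c_{c,j} r_{c,j}(n_j^* ) c_{a,j+1},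
   so a bound on n_j^* bounds hat c_{a,j+1}, and induction on j concludes. *)

Lemma sumR_ge0 (f : nat -> R) (n : nat) :
  (forall i, (i < n)%nat -> 0 <= f i) -> 0 <= sumR f n.
Proof.
  induction n as [|n IH]; simpl; intros Hf; [lra|].
  assert (0 <= sumR f n) by (apply IH; intros i Hi; apply Hf; lia).
  assert (0 <= f n) by (apply Hf; lia).
  lra.
Qed.

Lemma numerator_le_of_div_le (K x y P n : R) :
  1 <= n -> n <= P - 1 -> 0 <= K -> 0 < y ->
  (K + x) / (P - n) <= (K + y) / (P - 1) -> x <= y.
Proof.
  intros Hn HnP HK Hy Hdiv. apply Rnot_lt_le. intros Hyx.
  apply (Rle_not_lt _ _ Hdiv).
  apply Rlt_le_trans with ((K + x) / (P - 1)).
  - apply Rmult_lt_compat_r; [apply Rinv_0_lt_compat|]; lra.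
  - apply Rmult_le_compat_l; [|apply Rinv_le_contravar]; lra.
Qed.

Lemma MVT_pos (f f' : R -> R) (a b : R) :
  0 < a -> a < b -> (forall x, 0 < x -> is_derive f x (f' x)) ->
  exists c, a <= c <= b /\ f b - f a = f' c * (b - a).
Proof.
  intros Ha Hab Hf.
  destruct (MVT_gen f a b f') as [c [Hc Hmvt]].
  - intros x Hx. apply Hf. rewrite Rmin_left in Hx; lra.
  - intros x Hx. rewrite Rmin_left in Hx by lra.
    apply continuity_pt_filterlim, (@ex_derive_continuous R_AbsRing R_NormedModule).
    exists (f' x). apply Hf. lra.
  - exists c. rewrite Rmin_left, Rmax_right in Hc by lra. auto.
Qed.

Lemma increasing_of_derive_pos (f f' : R -> R) :
  (forall x, 0 < x -> is_derive f x (f' x)) -> (forall x, 0 < x -> 0 < f' x) ->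
  forall x y, 0 < x -> x < y -> f x < f y.
Proof.
  intros Hf Hpos x y Hx Hxy.
  destruct (MVT_pos f f' x y Hx Hxy Hf) as [c [Hc Hmvt]].
  assert (0 < f' c * (y - x)) by (apply Rmult_lt_0_compat; [apply Hpos|]; lra).
  lra.
Qed.

Lemma convex_stationary_linear_growth (f f' f'' : R -> R) (nb : R) :
  (forall x, 0 < x -> is_derive f x (f' x)) ->
  (forall x, 0 < x -> is_derive f' x (f'' x)) ->
  (forall x, 0 < x -> 0 < f'' x) ->
  0 < nb -> f' nb = 0 ->
  exists x0 d, 0 < x0 /\ 0 < d /\ forall x, x0 <= x -> f x0 + d * (x - x0) <= f x.
Proof.
  intros Hf Hf' Hf'' Hnb Hstat.
  pose proof (increasing_of_derive_pos f' f'' Hf' Hf'') as Hincr.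
  exists (nb + 1), (f' (nb + 1)). split; [lra|]. split.
  { rewrite <- Hstat. apply Hincr; lra. }
  intros x Hx. destruct (Req_dec x (nb + 1)) as [->|Hne]; [lra|].
  destruct (MVT_pos f f' (nb + 1) x) as [c [Hc Hmvt]]; [lra|lra|exact Hf|].
  assert (f' (nb + 1) <= f' c).
  { destruct (Req_dec c (nb + 1)) as [->|]; [lra|]. apply Rlt_le, Hincr; lra. }
  assert (f' (nb + 1) * (x - (nb + 1)) <= f' c * (x - (nb + 1)))
    by (apply Rmult_le_compat_r; lra).
  lra.
Qed.

Lemma C2_pos_is_derive (f : R -> R) (x : R) : C2_pos f -> 0 < x ->
  is_derive f x (Derive f x) /\ is_derive (Derive f) x (Derive_n f 2 x).
Proof.
  intros Hf Hx. destruct (Hf x Hx) as [Hd [Hd2 _]].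
  split; apply Derive_correct; assumption.
Qed.

(* The decreasing part cannot absorb the linear growth of the convex sum. *)
Lemma increasing_part_unbounded (ra rc : R -> R) (a c : R) :
  0 <= a -> 0 < c ->
  (forall x y, 0 < x -> x < y -> ra y <= ra x) ->
  (forall x, 0 < x -> 0 < rc x) ->
  C2_pos ra -> C2_pos rc ->
  (forall x, 0 < x -> 0 < a * Derive_n ra 2 x + c * Derive_n rc 2 x) ->
  (exists nb, 0 < nb /\ a * Derive ra nb + c * Derive rc nb = 0) ->
  forall T, exists X, 0 < X /\ T < rc X.
Proof.
  intros Ha Hc Hra_decr Hrc_pos Hra Hrc Hconv [nb [Hnb Hstat]] T.
  destruct (convex_stationary_linear_growth
              (fun x => a * ra x + c * rc x)
              (fun x => a * Derive ra x + c * Derive rc x)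
              (fun x => a * Derive_n ra 2 x + c * Derive_n rc 2 x) nb)
    as [x0 [d [Hx0 [Hd Hgrowth]]]]; try assumption.
  1, 2: intros x Hx; destruct (C2_pos_is_derive ra x Hra Hx);
        destruct (C2_pos_is_derive rc x Hrc Hx);
        apply (is_derive_plus (fun y => a * _ y) (fun y => c * _ y));
        apply is_derive_scal; assumption.
  set (L := c * Rabs T / d).
  assert (HL : d * L = c * Rabs T) by (unfold L; field; lra).
  assert (0 <= L) by (unfold L; apply Rmult_le_pos;
                      [apply Rmult_le_pos; [lra|apply Rabs_pos] | apply Rlt_le, Rinv_0_lt_compat; lra]).
  exists (x0 + L). split; [lra|].
  specialize (Hgrowth (x0 + L) ltac:(lra)).
  replace (x0 + L - x0) with L in Hgrowth by ring.
  assert (a * ra (x0 + L) <= a * ra x0).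
  { destruct (Req_dec L 0) as [->|]; [rewrite Rplus_0_r; lra|].
    apply Rmult_le_compat_l; [|apply Hra_decr]; lra. }
  assert (0 < c * rc x0) by (apply Rmult_lt_0_compat; [|apply Hrc_pos]; lra).
  assert (c * T <= c * Rabs T) by (apply Rmult_le_compat_l; [lra|apply Rle_abs]).
  apply Rmult_lt_reg_l with c; lra.
Qed.

Section BudgetIndependentBounds.

Variables (k : nat) (c_a c_c : nat -> R) (r_a r_c w rho : nat -> R -> R)
  (nstar : R -> nat -> R).

Local Notation adm p := (admissible k (nstar p) p).
Local Notation chat_at p j := (chat w (nstar p) c_a j).

Hypothesis Hc : forall j, (1 <= j <= k)%nat -> 0 < c_a j /\ 0 < c_c j.
Hypothesis Hra : forall j, (1 <= j <= k)%nat ->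
  (forall x, 0 < x -> 0 < r_a j x) /\
  (forall x y, 0 < x -> x < y -> r_a j y < r_a j x) /\
  C2_pos (r_a j).
Hypothesis Hrc : forall j, (1 <= j <= k)%nat ->
  (forall x, 0 < x -> 0 < r_c j x) /\
  (forall x y, 0 < x -> x < y -> r_c j x < r_c j y) /\
  C2_pos (r_c j).
Hypothesis Hw : forall j, (1 <= j <= k)%nat -> forall x, 0 < x ->
  0 < w j x /\ w j x <= c_c j * r_c j x.
Hypothesis Hrho : forall j, (1 <= j <= k)%nat -> forall x, 0 < x ->
  -1 <= rho j x <= 1 /\ 1 - (rho j x)^2 <= c_a j * r_a j x.
Hypothesis Hmin : forall p, adm p -> forall j, (1 <= j <= k)%nat ->
  is_unique_argmin (u w rho (nstar p) c_a c_c r_a r_c p j)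
    1 (pbud (nstar p) p j - 1) (nstar p j).
Hypothesis Hconv : forall p, adm p -> forall j, (1 <= j <= k)%nat -> forall x, 0 < x ->
  0 < chat_at p j * Derive_n (r_a j) 2 x + c_c j * Derive_n (r_c j) 2 x.
Hypothesis Hstat : forall p, adm p -> forall j, (1 <= j <= k)%nat ->
  exists nb, 0 < nb /\ chat_at p j * Derive (r_a j) nb + c_c j * Derive (r_c j) nb = 0.

Lemma nstar_ge1 p j : adm p -> (1 <= j <= k)%nat -> 1 <= nstar p j.
Proof. intros Hp Hj. apply (proj1 (Hmin p Hp j Hj)). Qed.

Lemma Wv_pos p i : adm p -> (i <= k)%nat -> 0 < Wv w (nstar p) i.
Proof.
  intros Hp Hi. destruct i as [|i]; simpl; [lra|].
  apply Hw; [lia|]. pose proof (nstar_ge1 p (S i) Hp ltac:(lia)). lra.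
Qed.

Lemma kappa_ge0 p j : adm p -> (1 <= j <= k)%nat -> 0 <= kappa w rho (nstar p) j.
Proof.
  intros Hp Hj. apply sumR_ge0. intros i Hi.
  pose proof (nstar_ge1 p (S i) Hp ltac:(lia)).
  destruct (Hrho (S i) ltac:(lia) (nstar p (S i)) ltac:(lra)) as [Hrange _].
  apply Rmult_le_pos; [apply Rlt_le, Wv_pos; [assumption|lia]|]. simpl. nra.
Qed.

Lemma chat_pos p j : adm p -> (1 <= j <= k)%nat -> 0 < chat_at p j.
Proof.
  intros Hp Hj. apply Rmult_lt_0_compat; [apply Wv_pos; [assumption|lia]|apply Hc, Hj].
Qed.

Lemma cost_nstar_le_cost_1 p j : adm p -> (1 <= j <= k)%nat ->
  c_c j * r_c j (nstar p j) <= chat_at p j * r_a j 1 + c_c j * r_c j 1.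
Proof.
  intros Hp Hj.
  destruct (Hmin p Hp j Hj) as [Hrange Hargmin].
  destruct (Hargmin 1) as [Hle _]; [specialize (Hp j Hj); lra|].
  destruct (Hra j Hj) as [Hra_pos _]. destruct (Hrc j Hj) as [Hrc_pos _].
  destruct (Hc j Hj) as [_ Hcc]. pose proof (chat_pos p j Hp Hj).
  assert (0 < chat_at p j * r_a j (nstar p j))
    by (apply Rmult_lt_0_compat; [|apply Hra_pos]; lra).
  assert (0 < chat_at p j * r_a j 1) by (apply Rmult_lt_0_compat; [|apply Hra_pos]; lra).
  assert (0 < c_c j * r_c j 1) by (apply Rmult_lt_0_compat; [|apply Hrc_pos]; lra).
  unfold u in Hle. rewrite !Rplus_assoc in Hle.
  apply numerator_le_of_div_le in Hle; try tauto; [lra|apply kappa_ge0|lra]; assumption.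
Qed.

Lemma nstar_bound_of_chat_bound j C : (1 <= j <= k)%nat ->
  (forall p, adm p -> chat_at p j <= C) ->
  exists B, forall p, adm p -> nstar p j <= B.
Proof.
  intros Hj HC.
  destruct (classic (exists p, adm p)) as [[p0 Hp0]|Hnone].
  2: { exists 0. intros p Hp. exfalso. eauto. }
  destruct (Hra j Hj) as [Hra_pos [Hra_decr Hra2]].
  destruct (Hrc j Hj) as [Hrc_pos [Hrc_incr Hrc2]].
  destruct (Hc j Hj) as [_ Hcc].
  set (T := (C * r_a j 1 + c_c j * r_c j 1) / c_c j).
  destruct (increasing_part_unbounded (r_a j) (r_c j) (chat_at p0 j) (c_c j))
    with (T := T) as [X [HX HTX]];
    auto using Rlt_le, chat_pos.
  exists X. intros p Hp. apply Rnot_lt_le. intros HXn.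
  pose proof (cost_nstar_le_cost_1 p j Hp Hj).
  assert (c_c j * r_c j X < c_c j * r_c j (nstar p j))
    by (apply Rmult_lt_compat_l, Hrc_incr; lra).
  assert (chat_at p j * r_a j 1 <= C * r_a j 1)
    by (apply Rmult_le_compat_r; [apply Rlt_le, Hra_pos; lra|auto]).
  assert (c_c j * T = C * r_a j 1 + c_c j * r_c j 1) by (unfold T; field; lra).
  assert (c_c j * T < c_c j * r_c j X) by (apply Rmult_lt_compat_l; lra).
  lra.
Qed.

Lemma chat_bound_of_nstar_bound j B : (1 <= j)%nat -> (S j <= k)%nat ->
  (forall p, adm p -> nstar p j <= B) ->
  forall p, adm p -> chat_at p (S j) <= c_c j * r_c j B * c_a (S j).
Proof.
  intros Hj HSj HB p Hp. unfold chat. replace (S j - 1)%nat with j by lia.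
  destruct j as [|j]; [lia|]. simpl.
  pose proof (nstar_ge1 p (S j) Hp ltac:(lia)).
  destruct (Hw (S j) ltac:(lia) (nstar p (S j)) ltac:(lra)) as [_ Hw_le].
  destruct (Hc (S j) ltac:(lia)) as [_ Hcc]. destruct (Hc (S (S j)) ltac:(lia)) as [Hca _].
  apply Rmult_le_compat_r; [lra|]. apply Rle_trans with (1 := Hw_le).
  apply Rmult_le_compat_l; [lra|].
  specialize (HB p Hp). destruct (Req_dec (nstar p (S j)) B) as [->|]; [lra|].
  apply Rlt_le, (Hrc (S j) ltac:(lia)); lra.
Qed.

End BudgetIndependentBounds.

Theorem proposition4
  (k : nat) (hk : (1 <= k)%nat)
  (c_a c_c : nat -> R) (r_a r_c w rho : nat -> R -> R)
  (nstar : R -> nat -> R)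
  (Hc : forall j, (1 <= j <= k)%nat -> 0 < c_a j /\ 0 < c_c j)
  (Hra : forall j, (1 <= j <= k)%nat ->
     (forall x, 0 < x -> 0 < r_a j x) /\
     (forall x y, 0 < x -> x < y -> r_a j y < r_a j x) /\
     C2_pos (r_a j))
  (Hrc : forall j, (1 <= j <= k)%nat ->
     (forall x, 0 < x -> 0 < r_c j x) /\
     (forall x y, 0 < x -> x < y -> r_c j x < r_c j y) /\
     C2_pos (r_c j))
  (Hw : forall j, (1 <= j <= k)%nat -> forall x, 0 < x ->
     0 < w j x /\ w j x <= c_c j * r_c j x)
  (Hrho : forall j, (1 <= j <= k)%nat -> forall x, 0 < x ->
     -1 <= rho j x <= 1 /\ 1 - (rho j x)^2 <= c_a j * r_a j x)
  (Hn0 : forall p, nstar p 0%nat = 0)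
  (Hmin : forall p, admissible k (nstar p) p ->
     forall j, (1 <= j <= k)%nat ->
     is_unique_argmin (u w rho (nstar p) c_a c_c r_a r_c p j)
       1 (pbud (nstar p) p j - 1) (nstar p j))
  (Hconv : forall p, admissible k (nstar p) p ->
     forall j, (1 <= j <= k)%nat -> forall x, 0 < x ->
     0 < chat w (nstar p) c_a j * Derive_n (r_a j) 2 x
         + c_c j * Derive_n (r_c j) 2 x)
  (Hstat : forall p, admissible k (nstar p) p ->
     forall j, (1 <= j <= k)%nat ->
     exists nb, 0 < nb /\
       chat w (nstar p) c_a j * Derive (r_a j) nb + c_c j * Derive (r_c j) nb = 0) :
  exists nbar : nat -> R,
    forall p, admissible k (nstar p) p ->
    forall j, (1 <= j <= k)%nat -> nstar p j <= nbar j.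
Proof.
  assert (Hupto : forall m, (m <= k)%nat -> exists nbar : nat -> R,
            forall p, admissible k (nstar p) p ->
            forall j, (1 <= j <= m)%nat -> nstar p j <= nbar j).
  { induction m as [|m IH]; intros Hm.
    - exists (fun _ => 0). intros p Hp j Hj. lia.
    - destruct (IH ltac:(lia)) as [nbar Hnbar].
      assert (HC : exists C, forall p, admissible k (nstar p) p ->
                     chat w (nstar p) c_a (S m) <= C).
      { destruct m as [|m].
        - exists (c_a 1%nat). intros p Hp. unfold chat. simpl. lra.
        - eexists. eapply chat_bound_of_nstar_bound; eauto; [lia|].
          intros p Hp. apply Hnbar; [assumption|lia]. }
      destruct HC as [C HC].
      edestruct nstar_bound_of_chat_bound with (j := S m) (C := C) as [B HB];
        eauto; [lia|].
      exists (fun j => if Nat.eqb j (S m) then B else nbar j).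
      intros p Hp j Hj. destruct (Nat.eqb_spec j (S m)) as [->|Hne]; [auto|].
      apply Hnbar; [assumption|lia]. }
  exact (Hupto k (le_n k)).
Qed.
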